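(* Let $u\in\widehat{\mathfrak{kv}}_2$, and let $f=\sum_{m\ge2}f_mx^m\in x^2k[[x]]$ be the unique series with $\mathrm{div}(u)=\mathrm{Tr}(f(x)-f(x+y)+f(y))$. Then $f$ is odd, and for each odd $m=3,5,\dots$ the map $u\mapsto f_m$ is a character of $\widehat{\mathfrak{kv}}_2$ (a linear map vanishing on $[\widehat{\mathfrak{kv}}_2,\widehat{\mathfrak{kv}}_2]$).
   Context: $k$ is a field of characteristic zero; $\mathfrak{lie}_2$, $\mathrm{Ass}_2$ are the degree completions of the free Lie and free associative algebras over $k$ on $x,y$. Each $a\in\mathrm{Ass}_2$ decomposes uniquely as $a=a_0+(\partial_xa)x+(\partial_ya)y$. $\mathfrak{tr}_n=\mathrm{Ass}_n^+/\langle ab-ba\rangle$ with projection $\mathrm{Tr}$; for $f=\sum f_mx^m$ without constant term, $\mathrm{Tr}(f(x))=\sum f_m\mathrm{Tr}(x^m)$ and similarly with $x$ replaced by $y$ or $x+y$. $\mathfrak{sder}_2$ is the Lie algebra of derivations $u$ of $\mathfrak{lie}_2$ with $u(x)=[x,a]$, $u(y)=[y,b]$ for some $a,b\in\mathfrak{lie}_2$ and $u(x+y)=0$; write $u=(a,b)$ normalized so that $a$ has no term $\lambda x$ and $b$ no term $\lambda y$. $\mathrm{div}(u)=\mathrm{Tr}(x\,\partial_xa+y\,\partial_yb)$. The differential $\delta:\mathfrak{tr}_2\to\mathfrak{tr}_3$ is $(\delta g)(x,y,z)=g(y,z)-g(x+y,z)+g(x,y+z)-g(x,y)$. $\widehat{\mathfrak{kv}}_2=\{u\in\mathfrak{sder}_2:\delta(\mathrm{div}(u))=0\}$,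 a Lie subalgebra; for $u$ in it there is a unique $f\in x^2k[[x]]$ as in the claim. *)

From HB Require Import structures.
From mathcomp Require Import all_boot all_order all_algebra.
Set Implicit Arguments. Unset Strict Implicit. Unset Printing Implicit Defensive.
Import Order.TTheory GRing.Theory Num.Theory.
Local Open Scope ring_scope.

Section Series.
Variable k : fieldType.

(* Degree completion of the free associative algebra Ass_n on letters 'I_n:
   a formal series is its coefficient function on words. *)
Definition ser (n : nat) := seq 'I_n -> k.

Variable n : nat.
Implicit Types (a b p q : ser n).

Definition szero : ser n := fun _ => 0.
Definition sone : ser n := fun w => (w == [::])%:R.
Definition sadd a b : ser n := fun w => a w + b w.
Definition sopp a : ser n := fun w => - a w.
Definition ssub a b : ser n := sadd a (sopp b).
Definition sscale (c : k) a : ser n := fun w => c * a w.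
Definition smul a b : ser n :=
  fun w => \sum_(i < (size w).+1) a (take i w) * b (drop i w).
Definition sbr a b : ser n := ssub (smul a b) (smul b a).
Definition spow a (j : nat) : ser n := iter j (smul a) sone.
Definition sprod (s : seq (ser n)) : ser n := foldr smul sone s.
Definition letter (i : 'I_n) : ser n := fun w => (w == [:: i])%:R.
Definition word (t : seq 'I_n) : ser n := fun w => (w == t)%:R.
Definition homog (d : nat) a : ser n := fun w => if size w == d then a w else 0.
Definition is_poly a : Prop := exists N, forall w, (N <= size w)%N -> a w = 0.

Inductive lie_poly : ser n -> Prop :=
| LP_zero : lie_poly szero
| LP_letter i : lie_poly (letter i)
| LP_add a b : lie_poly a -> lie_poly b -> lie_poly (sadd a b)
| LP_scale c a : lie_poly a -> lie_poly (sscale c a)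
| LP_br a b : lie_poly a -> lie_poly b -> lie_poly (sbr a b)
| LP_ext a b : (forall w, a w = b w) -> lie_poly a -> lie_poly b.

(* the degree completion of the free Lie algebra, inside Ass_n *)
Definition is_lie a : Prop := forall d, lie_poly (homog d a).

Inductive comm_span : ser n -> Prop :=
| CS_zero : comm_span szero
| CS_br p q : is_poly p -> is_poly q -> comm_span (sbr p q)
| CS_add a b : comm_span a -> comm_span b -> comm_span (sadd a b)
| CS_scale c a : comm_span a -> comm_span (sscale c a)
| CS_ext a b : (forall w, a w = b w) -> comm_span a -> comm_span b.

(* Tr a = Tr b in tr_n (degree completion of Ass_n^+/<ab-ba>),
   checked degree by degree *)
Definition tr_eq a b : Prop := forall d, comm_span (homog d (ssub a b)).

(* partial derivative: a = a_0 + sum_i (d_i a) x_i *)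
Definition dpart (i : 'I_n) a : ser n := fun w => a (rcons w i).

(* power series f(p) = sum_m f_m p^m, for p without constant term *)
Definition pser_at (f : nat -> k) (p : ser n) : ser n :=
  fun v => \sum_(j < (size v).+1) f j * spow p j v.

(* derivation of Ass_n with x_i |-> [x_i, c i], applied to a series *)
Definition der (c : 'I_n -> ser n) a : ser n :=
  fun v => \sum_(l < (size v).+1) \sum_(t : l.-tuple 'I_n)
     a t * \sum_(j < l) smul (smul (word (take j t)) (sbr (letter (tnth t j)) (c (tnth t j))))
                              (word (drop j.+1 t)) v.
End Series.

(* substitution homomorphism Ass_n -> Ass_m, x_i |-> phi i
   (phi i without constant term) *)
Definition subst (k : fieldType) (n m : nat) (phi : 'I_n -> ser k m) (a : ser k n) : ser k m :=
  fun v => \sum_(l < (size v).+1) \sum_(t : l.-tuple 'I_n)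
     a t * sprod (map phi t) v.

Definition x2 : 'I_2 := ord0.
Definition y2 : 'I_2 := inord 1.

Section Two.
Variable k : fieldType.
Definition X2 : ser k 2 := @letter k _ x2.
Definition Y2 : ser k 2 := @letter k _ y2.
Definition X3 : ser k 3 := @letter k _ (ord0 : 'I_3).
Definition Y3 : ser k 3 := @letter k _ (inord 1 : 'I_3).
Definition Z3 : ser k 3 := @letter k _ (inord 2 : 'I_3).

Definition sub2 (p q : ser k 3) : 'I_2 -> ser k 3 := fun i => if i == x2 then p else q.

Definition delta (g : ser k 2) : ser k 3 :=
  sadd (ssub (subst (sub2 Y3 Z3) g) (subst (sub2 (sadd X3 Y3) Z3) g))
       (ssub (subst (sub2 X3 (sadd Y3 Z3)) g) (subst (sub2 X3 Y3) g)).

(* an element u = (a,b) of sder_2, normalized: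
   u(x) = [x,a], u(y) = [y,b], u(x+y) = 0, a has no term lambda x,
   b has no term lambda y *)
Definition sder2 (a b : ser k 2) : Prop :=
  [/\ is_lie a, is_lie b, a [:: x2] = 0, b [:: y2] = 0 &
      forall w, sadd (sbr X2 a) (sbr Y2 b) w = 0].

(* representative of div(u) = Tr(x d_x a + y d_y b) *)
Definition div2 (a b : ser k 2) : ser k 2 :=
  sadd (smul X2 (dpart x2 a)) (smul Y2 (dpart y2 b)).

Definition kv2 (a b : ser k 2) : Prop :=
  sder2 a b /\ tr_eq (delta (div2 a b)) (@szero k 3).

Definition gen2 (a b : ser k 2) : 'I_2 -> ser k 2 := fun i => if i == x2 then a else b.

Definition in_x2kx (f : nat -> k) : Prop := f 0%N = 0 /\ f 1%N = 0.

(* representative of Tr(f(x) - f(x+y) + f(y)) *)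
Definition fcob (f : nat -> k) : ser k 2 :=
  sadd (ssub (pser_at f X2) (pser_at f (sadd X2 Y2))) (pser_at f Y2).

Definition is_f (a b : ser k 2) (f : nat -> k) : Prop :=
  in_x2kx f /\ tr_eq (div2 a b) (fcob f).
End Two.

(* Let T_m be the linear form on degree-m series summing the coefficients of the
   N_m words with exactly one y. It is invariant under rotation of words, so it
   factors through Tr, and on Tr (f(x) - f(x+y) + f(y)) it gives -N_m f_m. On
   div(u) it gives the coefficient b_m of x^(m-1) y in b: the relation
   [x,a] + [y,b] = 0 kills all coefficients of a at words with one y. In
   characteristic zero N_m <> 0, hence f_m = - b_m / N_m, and it remains to see
   that u |-> b_m is linear, vanishes for m even and on brackets. For m even,
   reversal acts on the Lie series b by -1 in odd degree, while [x,a] + [y,b] = 0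
   identifies the coefficients of x^(m-1) y and y x^(m-1). For a bracket, the
   coefficient of x^(m-1) y y in [y,b] is -b_m, while the derivation formula gives
   (b2_x b1_(m-1) + b2_(m-1) b1_x) - (b1_x b2_(m-1) + b1_(m-1) b2_x) = 0, where
   b_x is the coefficient of x in b. *)

From mathcomp Require Import all_boot all_order all_algebra.
From mathcomp Require Import ring zify.
Import GRing.Theory.
Local Open Scope ring_scope.

Set Implicit Arguments.
Unset Strict Implicit.

Lemma nseqS_rcons (T : Type) j (c : T) : nseq j.+1 c = rcons (nseq j c) c.
Proof. by elim: j => //= j ->. Qed.

Section Homog1.
Variables (k : fieldType) (n : nat).
Implicit Types (p q s : ser k n) (v w : seq 'I_n) (i e : 'I_n).

Definition homog1 s := forall w, size w != 1%N -> s w = 0.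

Lemma smul_homog1_cons s q e v : homog1 s -> smul s q (e :: v) = s [:: e] * q v.
Proof.
move=> Hs; rewrite /smul /= big_ord_recl /= Hs // mul0r add0r.
rewrite big_ord_recl /= add0n take0 drop0 big1 ?addr0 // => i _.
rewrite /bump /= add0n add1n Hs ?mul0r //= size_take.
by case: ifP => //; case: (size v) i => [[]|].
Qed.

Lemma smul_homog1_nil s q : homog1 s -> smul s q [::] = 0.
Proof. by move=> Hs; rewrite /smul /= big_ord_recl big_ord0 /= Hs // mul0r addr0. Qed.

Lemma smul_homog1_rcons s q e v : homog1 s -> smul q s (rcons v e) = q v * s [:: e].
Proof.
move=> Hs; rewrite /smul size_rcons big_ord_recr /= take_oversize ?size_rcons //.
rewrite drop_oversize ?size_rcons // Hs // mulr0 addr0 big_ord_recr /= -cats1.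
rewrite take_size_cat // drop_size_cat // big1 ?add0r // => i _.
rewrite Hs ?mulr0 //= drop_cat ltn_ord size_cat size_drop /= addn1 eqSS subn_eq0.
by rewrite -ltnNge ltn_ord.
Qed.

Lemma letter_homog1 i : homog1 (letter k i).
Proof. by move=> w Hw; rewrite /letter; case: eqP => // E; rewrite E in Hw. Qed.

Lemma letter1 i e : letter k i [:: e] = (e == i)%:R.
Proof. by rewrite /letter eqseq_cons andbT. Qed.

Lemma smul_letter_cons i p e v : smul (letter k i) p (e :: v) = (e == i)%:R * p v.
Proof. by rewrite smul_homog1_cons ?letter1 //; apply: letter_homog1. Qed.

Lemma smul_letter_rcons p i e v : smul p (letter k i) (rcons v e) = p v * (e == i)%:R.
Proof. by rewrite smul_homog1_rcons ?letter1 //; apply: letter_homog1. Qed.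

Lemma sbr_letter_cons i p e v :
  sbr (letter k i) p (e :: v) = (e == i)%:R * p v - smul p (letter k i) (e :: v).
Proof. by rewrite /sbr /ssub /sadd /sopp smul_letter_cons. Qed.

Lemma sbr_letter_cons_rcons i p e v e' :
  sbr (letter k i) p (e :: rcons v e')
  = (e == i)%:R * p (rcons v e') - p (e :: v) * (e' == i)%:R.
Proof. by rewrite sbr_letter_cons -rcons_cons smul_letter_rcons. Qed.

Lemma sbr_letter_nseq i p d (c : 'I_n) : sbr (letter k i) p (nseq d.+1 c) = 0.
Proof.
by rewrite sbr_letter_cons -[c :: _]/(nseq d.+1 c) nseqS_rcons smul_letter_rcons mulrC subrr.
Qed.

End Homog1.

Section LieSeries.
Variables (k : fieldType) (n : nat).
Implicit Types (p q : ser k n) (w : seq 'I_n).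

Lemma smul_nseqC p q m c : smul p q (nseq m c) = smul q p (nseq m c).
Proof.
rewrite /smul size_nseq (reindex_inj rev_ord_inj) /=; apply: eq_bigr => i _.
have Hi : (i <= m)%N by rewrite -ltnS ltn_ord.
by rewrite !take_nseq ?drop_nseq ?subSS ?leq_subr // subKn // mulrC.
Qed.

Lemma lie_poly_nseq p : lie_poly p -> forall m c, m != 1%N -> p (nseq m c) = 0.
Proof.
elim=> //=.
- move=> i m c Hm; rewrite /letter; case: eqP => // E.
  by have := congr1 size E; rewrite size_nseq => E'; rewrite E' in Hm.
- by move=> a b _ Ha _ Hb m c Hm; rewrite /sadd Ha ?Hb ?addr0.
- by move=> c0 a _ Ha m c Hm; rewrite /sscale Ha ?mulr0.
- by move=> a b _ _ _ _ m c Hm; rewrite /sbr /ssub /sadd /sopp smul_nseqC subrr.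
- by move=> a b E _ Ha m c Hm; rewrite -E Ha.
Qed.

Definition rev_antisym p := forall w, p (rev w) = (-1) ^+ (size w).+1 * p w.

Lemma smul_rev p q : rev_antisym p -> rev_antisym q ->
  forall w, smul p q (rev w) = (-1) ^+ size w * smul q p w.
Proof.
move=> Hp Hq w; rewrite /smul size_rev mulr_sumr (reindex_inj rev_ord_inj) /=.
apply: eq_bigr => i _.
have Hi : (i <= size w)%N by rewrite -ltnS ltn_ord.
rewrite take_rev drop_rev subKn // Hp Hq size_drop size_take.
case: ltnP => Hi2.
  rewrite mulrACA -exprD.
  have -> : ((size w - i).+1 + i.+1 = (size w).+2)%N by rewrite addSn addnS subnK.
  by rewrite !exprS; ring.
have -> : i = size w :> nat by apply/eqP; rewrite eqn_leq Hi Hi2.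
by rewrite subnn !exprS expr0; ring.
Qed.

Lemma lie_poly_rev p : lie_poly p -> rev_antisym p.
Proof.
elim=> //=.
- by move=> w; rewrite /szero mulr0.
- move=> i w; rewrite /letter.
  have [->|Hw] := eqVneq w [:: i]; first by rewrite eqxx /= !exprS expr0; ring.
  rewrite mulr0; suff -> : (rev w == [:: i]) = false by [].
  by apply/negbTE; apply: contra Hw => /eqP E; rewrite -(revK w) E.
- by move=> a b _ Ha _ Hb w; rewrite /sadd Ha Hb mulrDr.
- by move=> c a _ Ha w; rewrite /sscale Ha mulrCA.
- move=> a b _ Ha _ Hb w; rewrite /sbr /ssub /sadd /sopp !smul_rev //.
  by rewrite exprS mulN1r mulNr -mulrN opprB mulrBr.
- by move=> a b E _ Ha w; rewrite -!E Ha.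
Qed.

Lemma homog_at d p w : size w = d -> homog d p w = p w.
Proof. by move=> <-; rewrite /homog eqxx. Qed.

Lemma is_lie_nseq p m c : is_lie p -> m != 1%N -> p (nseq m c) = 0.
Proof.
by move=> Hp Hm; rewrite -(@homog_at m p) ?size_nseq //; apply: lie_poly_nseq.
Qed.

Lemma is_lie_rev p w : is_lie p -> p (rev w) = (-1) ^+ (size w).+1 * p w.
Proof.
move=> Hp; rewrite -(@homog_at (size w) p (rev w)) ?size_rev //.
by rewrite lie_poly_rev // homog_at.
Qed.

End LieSeries.

Section TraceSum.
Variables (k : fieldType) (n : nat).
Implicit Types (a b p q s : ser k n) (w : seq 'I_n).

(* With [g] invariant under rotation of words, [trace_sum m g] factors through
   the trace [Tr] in degree [m]. *)
Definition trace_sum m (g : seq 'I_n -> k) s : k := \sum_(t : m.-tuple 'I_n) g t * s t.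

Definition rot_invariant (g : seq 'I_n -> k) := forall i w, g (rot i w) = g w.

Lemma sum_tuple_eq l (u : seq 'I_n) (F : seq 'I_n -> k) : size u = l ->
  \sum_(t : l.-tuple 'I_n) (tval t == u)%:R * F t = F u.
Proof.
move=> Hu; have Hu' : size u == l by rewrite Hu.
rewrite (bigD1 (Tuple Hu')) //= eqxx mul1r big1 ?addr0 // => t Ht.
case: eqP => E; last by rewrite mul0r.
have Et : t = Tuple Hu' by apply: val_inj.
  by rewrite Et eqxx in Ht.
Qed.

Lemma trace_sum_lincomb m g s a b c1 c2 : (forall w, s w = c1 * a w + c2 * b w) ->
  trace_sum m g s = c1 * trace_sum m g a + c2 * trace_sum m g b.
Proof.
move=> Hs; rewrite /trace_sum !mulr_sumr -big_split; apply: eq_bigr => t _ /=.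
by rewrite Hs mulrDr (mulrCA (g t) c1) (mulrCA (g t) c2).
Qed.

Lemma trace_sum_homog m g s : trace_sum m g (homog m s) = trace_sum m g s.
Proof. by apply: eq_bigr => t _; rewrite homog_at // size_tuple. Qed.

Lemma rot_tuple_inj m i : injective (fun t : m.-tuple 'I_n => [tuple of rot i t]).
Proof. by move=> t1 t2 /(congr1 val) /= /rot_inj E; apply: val_inj. Qed.

Lemma trace_sum_smulC m g p q : rot_invariant g ->
  trace_sum m g (smul p q) = trace_sum m g (smul q p).
Proof.
move=> Hg.
have E p' q' : trace_sum m g (smul p' q')
    = \sum_(i < m.+1) \sum_(t : m.-tuple 'I_n) g t * (p' (take i t) * q' (drop i t)).
  rewrite exchange_big /=; apply: eq_bigr => t _ /=.
  by rewrite /smul size_tuple mulr_sumr.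
rewrite !E [RHS](reindex_inj rev_ord_inj) /=; apply: eq_bigr => i _.
rewrite [RHS](reindex_inj (@rot_tuple_inj m i)) /=; apply: eq_bigr => t _.
have Hs : size (drop i t) = (m - i)%N by rewrite size_drop size_tuple.
rewrite subSS Hg /rot -[(m - i)%N]Hs take_size_cat // drop_size_cat //; ring.
Qed.

Lemma trace_sum_comm_span m g s : rot_invariant g -> comm_span s -> trace_sum m g s = 0.
Proof.
move=> Hg; elim => //=.
- by rewrite /trace_sum big1 // => t _; rewrite /szero mulr0.
- move=> p q _ _.
  have E w : sbr p q w = 1 * smul p q w + (-1) * smul q p w by rewrite mul1r mulN1r.
  by rewrite (trace_sum_lincomb m g E) trace_sum_smulC // mul1r mulN1r subrr.
- move=> a b _ Ha _ Hb.
  have E w : sadd a b w = 1 * a w + 1 * b w by rewrite !mul1r.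
  by rewrite (trace_sum_lincomb m g E) Ha Hb mulr0 addr0.
- move=> c a _ Ha.
  have E w : sscale c a w = c * a w + 0 * a w by rewrite mul0r addr0.
  by rewrite (trace_sum_lincomb m g E) Ha !mulr0 addr0.
- by move=> a b E _ Ha; rewrite -Ha; apply: eq_bigr => t _; rewrite E.
Qed.

Lemma trace_sum_tr_eq m g a b : rot_invariant g -> tr_eq a b ->
  trace_sum m g a = trace_sum m g b.
Proof.
move=> Hg Htr; apply/eqP; rewrite -subr_eq0.
have E w : ssub a b w = 1 * a w + (-1) * b w by rewrite mul1r mulN1r.
rewrite -(trace_sum_comm_span m Hg (Htr m)) trace_sum_homog.
by rewrite (trace_sum_lincomb m g E) mul1r mulN1r.
Qed.

End TraceSum.

Section TwoLetters.
Variable k : fieldType.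
Implicit Types (a b p s : ser k 2) (v w : seq 'I_2).

Lemma y2_neq_x2 : (y2 == x2) = false.
Proof. by apply/negbTE/eqP => /(congr1 val); rewrite /= inordK. Qed.

Lemma x2_neq_y2 : (x2 == y2) = false.
Proof. by rewrite eq_sym y2_neq_x2. Qed.

Lemma ord2_cases (e : 'I_2) : e = x2 \/ e = y2.
Proof.
case: e => [[|[|m]] H]; [left | right |] => //; apply: val_inj => //=.
by rewrite inordK.
Qed.

Lemma sum_ord2 (F : 'I_2 -> k) : \sum_(e : 'I_2) F e = F x2 + F y2.
Proof.
rewrite big_ord_recl big_ord_recl big_ord0 addr0; congr (F _ + F _).
by apply: val_inj; rewrite /= inordK.
Qed.

Lemma XY_homog1 : homog1 (sadd (X2 k) (Y2 k)).
Proof. by move=> w Hw; rewrite /sadd /X2 /Y2 !letter_homog1 ?addr0. Qed.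

Lemma XY_letter e : sadd (X2 k) (Y2 k) [:: e] = 1.
Proof.
rewrite /sadd /X2 /Y2 !letter1.
by case: (ord2_cases e) => ->; rewrite ?eqxx ?y2_neq_x2 ?x2_neq_y2 /= ?addr0 ?add0r.
Qed.

Lemma spow_homog1_nil s j : homog1 s -> spow s j.+1 [::] = 0.
Proof. by move=> Hs; rewrite /spow iterS smul_homog1_nil. Qed.

Lemma spow_homog1_cons s j e v : homog1 s -> spow s j.+1 (e :: v) = s [:: e] * spow s j v.
Proof. by move=> Hs; rewrite /spow iterS smul_homog1_cons. Qed.

Lemma spow_letter i j w : spow (letter k i) j w = (w == nseq j i)%:R.
Proof.
elim: j w => [|j IH] [|e v] //; first by rewrite spow_homog1_nil //; apply: letter_homog1.
rewrite spow_homog1_cons ?IH ?letter1 /= ?eqseq_cons; last by apply: letter_homog1.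
by case: (e == _); case: (v == _); rewrite /= ?mulr1 ?mulr0.
Qed.

Lemma spow_XY j w : spow (sadd (X2 k) (Y2 k)) j w = (size w == j)%:R.
Proof.
elim: j w => [|j IH] [|e v] //; first by rewrite spow_homog1_nil //; apply: XY_homog1.
by rewrite spow_homog1_cons ?IH ?XY_letter ?mul1r //; apply: XY_homog1.
Qed.

Lemma pser_at_homog (f : nat -> k) p w : (forall j, j != size w -> spow p j w = 0) ->
  pser_at f p w = f (size w) * spow p (size w) w.
Proof.
move=> H; rewrite /pser_at big_ord_recr /= big1 ?add0r // => j _.
by rewrite H ?mulr0 // neq_ltn ltn_ord.
Qed.

Lemma fcobE (f : nat -> k) w :
  fcob f w = f (size w) * ((w == nseq (size w) x2)%:R - 1 + (w == nseq (size w) y2)%:R).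
Proof.
have Hnseq i j : j != size w -> (w == nseq j i)%:R = 0 :> k.
  by move=> Hj; case: eqP => // E; rewrite E size_nseq eqxx in Hj.
have -> : fcob f w = pser_at f (X2 k) w - pser_at f (sadd (X2 k) (Y2 k)) w
                      + pser_at f (Y2 k) w by [].
rewrite !pser_at_homog.
- by rewrite /X2 /Y2 !spow_letter spow_XY eqxx /=; ring.
- by move=> j Hj; rewrite /Y2 spow_letter Hnseq.
- by move=> j Hj; rewrite spow_XY eq_sym (negbTE Hj).
- by move=> j Hj; rewrite /X2 spow_letter Hnseq.
Qed.

(* [trace_sum m (one_y k)] reads off the coefficient of [Tr (x^(m-1) y)]. *)
Definition one_y w : k := (count_mem y2 w == 1%N)%:R.

Definition one_y_count m : k := \sum_(t : m.-tuple 'I_2) one_y t.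

Lemma one_y_rot : rot_invariant one_y.
Proof. by move=> i w; rewrite /one_y /rot count_cat addnC -count_cat cat_take_drop. Qed.

Lemma one_y_count_neq0 m : [pchar k] =i pred0 -> (0 < m)%N -> one_y_count m != 0.
Proof.
move=> Hc Hm.
have Hs : size (nseq m.-1 x2 ++ [:: y2]) == m by rewrite size_cat size_nseq addn1 prednK.
rewrite /one_y_count /one_y -natr_sum ((pcharf0P _).1 Hc) (bigD1 (Tuple Hs)) //=.
by rewrite count_cat count_nseq /= x2_neq_y2 /= eqxx.
Qed.

Lemma trace_sum_fcob m (f : nat -> k) : (2 <= m)%N ->
  trace_sum m one_y (fcob f) = - f m * one_y_count m.
Proof.
move=> Hm; rewrite /one_y_count /trace_sum mulr_sumr; apply: eq_bigr => t _.
rewrite fcobE size_tuple /one_y.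
case: eqP => Hc; last by rewrite !mul0r mulr0.
have -> : (tval t == nseq m x2) = false.
  by apply/negbTE/eqP => E; move: Hc; rewrite E count_nseq /= x2_neq_y2.
have -> : (tval t == nseq m y2) = false.
  apply/negbTE/eqP => E; move: Hc; rewrite E count_nseq /= eqxx mul1n => E1.
  by rewrite E1 in Hm.
by rewrite /=; ring.
Qed.

Lemma sbrX_x_rcons_y p w : sbr (X2 k) p (x2 :: rcons w y2) = p (rcons w y2).
Proof. by rewrite /X2 sbr_letter_cons_rcons eqxx y2_neq_x2 mul1r mulr0 subr0. Qed.

Lemma sbrY_x_rcons_y p w : sbr (Y2 k) p (x2 :: rcons w y2) = - p (x2 :: w).
Proof. by rewrite /Y2 sbr_letter_cons_rcons eqxx x2_neq_y2 mul0r mulr1 sub0r. Qed.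

End TwoLetters.

Section SpecialDerivations.
Variable k : fieldType.
Implicit Types (a b : ser k 2) (v w : seq 'I_2).

Definition xs_y j : seq 'I_2 := rcons (nseq j x2) y2.

Lemma xs_yy j : nseq j.+1 x2 ++ [:: y2; y2] = x2 :: rcons (xs_y j) y2.
Proof. by rewrite /= /xs_y -!cats1 -catA. Qed.

Lemma sder2_at a b w : sder2 a b -> sbr (X2 k) a w + sbr (Y2 k) b w = 0.
Proof. by case=> _ _ _ _; apply. Qed.

(* [[x,a] + [y,b] = 0] at [x x^i y x^j x]: a trailing [x] of a word with one [y]
   can be moved to the front without changing the coefficient of [a]. *)
Lemma sder2_a_one_y a b i j : sder2 a b -> (0 < i + j)%N ->
  a (nseq i x2 ++ y2 :: nseq j x2) = 0.
Proof.
move=> Hs; have [_ Hb _ _ _] := Hs.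
elim: j i => [|j IH] i Hij.
- have := sder2_at (x2 :: xs_y i) Hs.
  rewrite /X2 /Y2 !sbr_letter_cons_rcons !eqxx y2_neq_x2 x2_neq_y2 /= mul1r mulr1 !mul0r.
  have Hi : i.+1 != 1%N by rewrite eqSS -lt0n -(addn0 i).
  by rewrite (@is_lie_nseq _ _ b i.+1 x2 Hb Hi) mulr0 subr0 subrr addr0 cats1.
- have := sder2_at (x2 :: rcons (nseq i x2 ++ y2 :: nseq j x2) x2) Hs.
  rewrite /X2 /Y2 !sbr_letter_cons_rcons !eqxx ?y2_neq_x2 ?x2_neq_y2 /= ?mul1r ?mulr1 ?mul0r ?mulr0.
  rewrite subrr addr0 rcons_cat rcons_cons -nseqS_rcons => /eqP; rewrite subr_eq0 => /eqP ->.
  by apply: (IH i.+1); rewrite addSn.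
Qed.

Lemma sder2_b_xs_y a b j : sder2 a b -> b (xs_y j) = b (y2 :: nseq j x2).
Proof.
move=> Hs; have := sder2_at (y2 :: xs_y j) Hs.
rewrite /X2 /Y2 !sbr_letter_cons_rcons !eqxx y2_neq_x2 /= mul0r mul1r mulr0 mulr1 sub0r oppr0 add0r.
by move/eqP; rewrite subr_eq0 => /eqP.
Qed.

Lemma sder2_b_xs_y_odd a b j : [pchar k] =i pred0 -> sder2 a b -> odd j -> b (xs_y j) = 0.
Proof.
move=> Hc Hs Hj; have [_ Hb _ _ _] := Hs.
have := is_lie_rev (xs_y j) Hb.
rewrite rev_rcons rev_nseq -(sder2_b_xs_y _ Hs) size_rcons size_nseq -signr_odd /= Hj.
rewrite expr1 mulN1r => /eqP; rewrite -subr_eq0 opprK -mulr2n -mulr_natl mulf_eq0.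
by rewrite ((pcharf0P _).1 Hc) => /eqP.
Qed.

Lemma div2_nil a b : div2 a b [::] = 0.
Proof.
by rewrite /div2 /sadd /X2 /Y2 !smul_homog1_nil ?addr0 //; apply: letter_homog1.
Qed.

Lemma div2_cons a b e v :
  div2 a b (e :: v) = (e == x2)%:R * a (rcons v x2) + (e == y2)%:R * b (rcons v y2).
Proof. by rewrite /div2 /sadd /X2 /Y2 !smul_letter_cons. Qed.

Lemma count_y0 w : count_mem y2 w = 0%N -> w = nseq (size w) x2.
Proof.
elim: w => //= e w IH; case: (ord2_cases e) => ->; rewrite ?eqxx ?x2_neq_y2 //=.
by move=> H; rewrite -IH.
Qed.

Lemma count_y1 w : count_mem y2 w = 1%N -> exists i j, w = nseq i x2 ++ y2 :: nseq j x2.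
Proof.
elim: w => //= e w IH; case: (ord2_cases e) => ->; rewrite ?eqxx ?x2_neq_y2 /= => H.
- by have [i [j ->]] := IH H; exists i.+1, j.
- by exists 0%N, (size w); rewrite -count_y0 //; case: H.
Qed.

Lemma trace_sum_div2 a b m : sder2 a b -> (0 < m)%N ->
  trace_sum m (one_y k) (div2 a b) = b (xs_y m.-1).
Proof.
move=> Hs Hm; rewrite -(@sum_tuple_eq _ _ m (y2 :: nseq m.-1 x2) (fun=> b (xs_y m.-1))); last first.
  by rewrite /= size_nseq prednK.
apply: eq_bigr => t _; rewrite /one_y.
have [Et|Nt] := eqVneq (tval t) (y2 :: nseq m.-1 x2).
  rewrite Et /= eqxx count_nseq /= x2_neq_y2 mul0n /= div2_cons y2_neq_x2 eqxx.
  by rewrite mul0r add0r !mul1r.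
rewrite mul0r; case: eqP => [/count_y1 [[|i] [j Et]]|]; last by rewrite mul0r.
  have Hj : j = m.-1 by rewrite -(size_tuple t) Et /= size_nseq.
  by move: Nt; rewrite Et Hj eqxx.
rewrite Et mul1r /= div2_cons eqxx x2_neq_y2 mul0r addr0 mul1r.
by rewrite rcons_cat rcons_cons -nseqS_rcons (sder2_a_one_y Hs) ?addnS.
Qed.

Lemma div2_lincomb a1 b1 a2 b2 a b (c1 c2 : k) :
  (forall w, a w = c1 * a1 w + c2 * a2 w) -> (forall w, b w = c1 * b1 w + c2 * b2 w) ->
  forall w, div2 a b w = c1 * div2 a1 b1 w + c2 * div2 a2 b2 w.
Proof.
move=> Ha Hb [|e v]; first by rewrite !div2_nil !mulr0 addr0.
by rewrite !div2_cons Ha Hb; ring.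
Qed.

Lemma is_f_trace_sum a b (f : nat -> k) m : [pchar k] =i pred0 -> is_f a b f -> (2 <= m)%N ->
  f m = - trace_sum m (one_y k) (div2 a b) / one_y_count k m.
Proof.
move=> Hc [_ Htr] Hm.
rewrite (trace_sum_tr_eq m (one_y_rot k) Htr) trace_sum_fcob // !mulNr opprK mulfK //.
by rewrite one_y_count_neq0 // ltnW.
Qed.

End SpecialDerivations.

Section DerivationFormula.
Variables (k : fieldType) (n : nat).
Implicit Types (p q : ser k n) (v u s r : seq 'I_n).

Lemma sum_single (N : nat) (F : nat -> k) i0 : (i0 <= N)%N ->
  (forall i, (i <= N)%N -> i != i0 -> F i = 0) -> \sum_(i < N.+1) F i = F i0.
Proof.
move=> Hi0 H; rewrite (bigD1 (Ordinal (Hi0 : i0 < N.+1)%N)) //= big1 ?addr0 // => i Hne.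
by apply: H; [rewrite -ltnS | apply: contra Hne => /eqP E; apply/eqP/val_inj].
Qed.

Lemma smul_word_r q r v : smul q (word k r) v =
  ((size r <= size v)%N && (drop (size v - size r) v == r))%:R * q (take (size v - size r) v).
Proof.
rewrite /smul /word; case: (boolP (_ && _)) => [/andP [Hr /eqP Hd]|Hc].
  rewrite mul1r (@sum_single _ (fun i => q (take i v) * (drop i v == r)%:R) (size v - size r)).
  - by rewrite /= Hd eqxx mulr1.
  - by rewrite leq_subr.
  move=> i Hi Hne; case: eqP => [E|]; last by rewrite mulr0.
  by move: Hne; rewrite -E size_drop subKn // eqxx.
rewrite mul0r big1 // => i _; case: eqP => [E|]; last by rewrite mulr0.
move: Hc; rewrite -E size_drop leq_subr /= subKn; first by rewrite eqxx.
by rewrite -ltnS ltn_ord.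
Qed.

Lemma smul_word_l q s u : smul (word k s) q u =
  ((size s <= size u)%N && (take (size s) u == s))%:R * q (drop (size s) u).
Proof.
rewrite /smul /word; case: (boolP (_ && _)) => [/andP [Hs /eqP Hd]|Hc].
  rewrite mul1r (@sum_single _ (fun i => (take i u == s)%:R * q (drop i u)) (size s)) //.
  - by rewrite /= Hd eqxx mul1r.
  move=> i Hi Hne; case: eqP => [E|]; last by rewrite mul0r.
  by move: Hne; rewrite -E size_take_min (minn_idPl _) // eqxx.
rewrite mul0r big1 // => i _; case: eqP => [E|]; last by rewrite mul0r.
have Hi : (i <= size u)%N by rewrite -ltnS ltn_ord.
by move: Hc; rewrite -E size_take_min (minn_idPl _) // Hi /= eqxx.
Qed.

Lemma smul_word_mid q t j v : (j < size t)%N -> (size t <= size v)%N ->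
  smul (smul (word k (take j t)) q) (word k (drop j.+1 t)) v =
  (drop (size v - (size t - j.+1)) v == drop j.+1 t)%:R * (take j v == take j t)%:R *
   q (drop j (take (size v - (size t - j.+1)) v)).
Proof.
move=> Hj Hl; rewrite smul_word_r smul_word_l size_drop size_take Hj.
have -> : (size t - j.+1 <= size v)%N by lia.
rewrite /= size_take_min (minn_idPl _); last by lia.
have -> : (j <= size v - (size t - j.+1))%N by lia.
rewrite /= take_takel; last by lia.
by rewrite [(take j v == _)]eq_sym; ring.
Qed.

Lemma sum_tuple_slot l (j : 'I_l) s r (P : seq 'I_n -> k) (G : 'I_n -> k) :
  size s = j -> size r = (l - j.+1)%N ->
  \sum_(t : l.-tuple 'I_n) P t * ((r == drop j.+1 t)%:R * (s == take j t)%:R * G (tnth t j))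
  = \sum_(e : 'I_n) P (s ++ e :: r) * G e.
Proof.
move=> Hs Hr.
have E1 e : P (s ++ e :: r) * G e =
    \sum_(t : l.-tuple 'I_n) (tval t == s ++ e :: r)%:R * (P t * G e).
  rewrite (@sum_tuple_eq _ _ l _ (fun t => P t * G e)) //.
  by rewrite size_cat /= Hs Hr; move: (ltn_ord j); lia.
rewrite (eq_bigr _ (fun e _ => E1 e)) exchange_big /=; apply: eq_bigr => t _.
have Et : tval t = take j t ++ tnth t j :: drop j.+1 t.
  by rewrite (tnth_nth (tnth t j)) -drop_nth ?size_tuple // cat_take_drop.
have Hsz : size (take j t) = size s by rewrite size_take size_tuple ltn_ord.
under eq_bigr => e _ do rewrite [in tval t == _]Et eqseq_cat // eqseq_cons.
rewrite (bigD1 (tnth t j)) //= big1 ?addr0; last first.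
  by move=> e He; rewrite [tnth t j == e]eq_sym (negbTE He) /= andbF mul0r.
rewrite [tnth t j == tnth t j]eqxx [take _ _ == s]eq_sym [drop _ _ == r]eq_sym.
by case: (s == _); case: (r == _); rewrite /= ?mul1r ?mul0r ?mulr0 ?mulr1.
Qed.

(* the contribution to [der c p v] of the letters [v_j .. v_(K-1)], arising
   from a letter [e] of a word of [p] *)
Definition der_slot (c : 'I_n -> ser k n) p v j K : k :=
  \sum_(e : 'I_n) p (take j v ++ e :: drop K v) * sbr (letter k e) (c e) (drop j (take K v)).

Lemma derE (c : 'I_n -> ser k n) p v :
  der c p v = \sum_(l < (size v).+1) \sum_(j < l) der_slot c p v j (size v - (l - j.+1)).
Proof.
rewrite /der; apply: eq_bigr => l _.
under eq_bigr => t _ do rewrite mulr_sumr.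
rewrite exchange_big /=; apply: eq_bigr => j _.
have Hl : (l <= size v)%N by rewrite -ltnS ltn_ord.
under eq_bigr => t _ do rewrite smul_word_mid ?size_tuple //.
apply: (@sum_tuple_slot l j (take j v) (drop (size v - (l - j.+1)) v) (fun t => p t)).
- by rewrite size_take_min (minn_idPl _) //; apply: ltnW; apply: leq_trans Hl.
- by rewrite size_drop; move: (ltn_ord j); lia.
Qed.

End DerivationFormula.

Lemma take_nseq_cat (T : Type) j d (c : T) s : (j <= d)%N -> take j (nseq d c ++ s) = nseq j c.
Proof.
move=> H; rewrite take_cat size_nseq; case: ltnP => H2; first by rewrite take_nseq // ltnW.
have -> : j = d by apply/eqP; rewrite eqn_leq H H2.
by rewrite subnn take0 cats0.
Qed.

Lemma drop_nseq_cat (T : Type) j d (c : T) s : (j <= d)%N ->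
  drop j (nseq d c ++ s) = nseq (d - j) c ++ s.
Proof.
move=> H; rewrite drop_cat size_nseq; case: ltnP => H2; first by rewrite drop_nseq.
have -> : j = d by apply/eqP; rewrite eqn_leq H H2.
by rewrite subnn drop0.
Qed.

Lemma sum_slots (k : fieldType) (N j0 K0 : nat) (X : k) : (j0 < K0 <= N)%N ->
  \sum_(l < N.+1) \sum_(j < l) ((j == j0 :> nat) && (N - (l - j.+1) == K0)%N)%:R * X = X.
Proof.
case/andP=> HjK HK; have Hl0 : (N - K0 + j0 < N)%N by lia.
rewrite (@sum_single _ _
          (fun l => \sum_(j < l) ((j == j0 :> nat) && (N - (l - j.+1) == K0)%N)%:R * X)
                     (N - K0 + j0).+1) //=.
  rewrite (@sum_single _ _ (fun j => ((j == j0) && (N - ((N - K0 + j0).+1 - j.+1) == K0)%N)%:R * X)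
                      j0) /=; last 2 first.
  - by lia.
  - by move=> j _ /negbTE ->; rewrite mul0r.
  have -> : (N - ((N - K0 + j0).+1 - j0.+1) == K0)%N by apply/eqP; lia.
  by rewrite eqxx mul1r.
move=> l Hl Hne; rewrite big1 // => j _.
case: (eqVneq (j : nat) j0) => [Ej|]; last by rewrite mul0r.
have -> : (N - (l - j.+1) == K0)%N = false by apply/negbTE/eqP; move: (ltn_ord j) Hne; lia.
by rewrite andbF mul0r.
Qed.

Section DerAtXsYY.
Variables (k : fieldType) (n0 : nat) (a1 b1 b2 : ser k 2).
Hypotheses (Hs1 : sder2 a1 b1) (Hb2 : is_lie b2).

Lemma gen2x : gen2 a1 b1 x2 = a1. Proof. by rewrite /gen2 eqxx. Qed.
Lemma gen2y : gen2 a1 b1 y2 = b1. Proof. by rewrite /gen2 y2_neq_x2. Qed.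

Let v0 := nseq n0.+2 x2 ++ [:: y2; y2].
Let slot j K := der_slot (gen2 a1 b1) (sbr (Y2 k) b2) v0 j K.

Lemma slot_within_xs j K : (j < K <= n0.+2)%N -> slot j K = 0.
Proof.
case/andP=> HjK HK.
rewrite /slot /der_slot sum_ord2 gen2x gen2y /v0 (@take_nseq_cat _ K) // drop_nseq.
have -> : (K - j)%N = (K - j).-1.+1 by rewrite prednK // subn_gt0.
by rewrite !sbr_letter_nseq !mulr0 addr0.
Qed.

Lemma slot_to_first_y j : (j < n0.+3)%N ->
  slot j n0.+3 = (j == n0.+1)%:R * (b2 (xs_y n0.+1) * b1 [:: x2]).
Proof.
move=> Hj; rewrite /slot /der_slot sum_ord2 gen2x gen2y.
have -> : take n0.+3 v0 = xs_y n0.+2.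
  by rewrite /v0 take_cat size_nseq ltnNge leqnSn /= subSn // subnn /= cats1.
have -> : drop n0.+3 v0 = [:: y2].
  by rewrite /v0 drop_cat size_nseq ltnNge leqnSn /= subSn // subnn.
rewrite take_nseq_cat // /xs_y -cats1 drop_nseq_cat //.
case: (ltnP j n0.+2) => Hj2; last first.
  have -> : j = n0.+2 by lia.
  by rewrite subnn /= -[[:: y2]]/(nseq 1 y2) !sbr_letter_nseq gtn_eqF // !mulr0 addr0 mul0r.
have -> : (n0.+2 - j)%N = (n0.+1 - j).+1 by rewrite subSn.
have Exy i : nseq i x2 ++ [:: x2; y2] = x2 :: rcons (nseq i x2) y2 by elim: i => //= i ->.
rewrite /= cats1 Exy sbrY_x_rcons_y sbrX_x_rcons_y sbrY_x_rcons_y.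
have Hx_term : b2 (x2 :: nseq j x2) * a1 (rcons (nseq (n0.+1 - j) x2) y2) = 0.
  case: j {Hj Hj2 Exy} => [|j]; last by rewrite (@is_lie_nseq _ _ b2 j.+2 x2 Hb2) ?mul0r.
  by rewrite subn0 -cats1 (@sder2_a_one_y _ _ _ n0.+1 0 Hs1) ?mulr0.
rewrite mulNr Hx_term oppr0 add0r.
have [-> | Nj] := eqVneq j n0.+1.
  by rewrite xs_yy sbrY_x_rcons_y subnn -[x2 :: xs_y n0]/(xs_y n0.+1) /=; ring.
have [_ Hb1 _ _ _] := Hs1.
have -> : b1 (x2 :: nseq (n0.+1 - j) x2) = 0.
  apply: (@is_lie_nseq _ _ b1 (n0.+1 - j).+1 x2 Hb1).
  by rewrite eqSS -lt0n subn_gt0 ltn_neqAle Nj.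
by rewrite oppr0 !mulr0 mul0r.
Qed.

Lemma slot_to_last_y j : (j < n0.+4)%N ->
  slot j n0.+4 = (j == 1%N)%:R * (b2 [:: x2] * b1 (xs_y n0.+1)).
Proof.
move=> Hj; rewrite /slot /der_slot sum_ord2 gen2x gen2y.
have Hv0 : size v0 = n0.+4 by rewrite /v0 size_cat size_nseq addn2.
rewrite (@take_oversize _ n0.+4) ?Hv0 // (@drop_oversize _ n0.+4) ?Hv0 //.
case: (ltnP j n0.+3) => Hj3; last first.
  have -> : j = n0.+3 by lia.
  have -> : drop n0.+3 v0 = nseq 1 y2.
    by rewrite /v0 drop_cat size_nseq ltnNge leqnSn /= subSn // subnn.
  by rewrite !sbr_letter_nseq !mulr0 addr0 mul0r.
rewrite /v0 take_nseq_cat // drop_nseq_cat // cats1 -nseqS_rcons sbr_letter_nseq mul0r add0r.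
case: j Hj Hj3 => [|[|j]] _ Hj3.
- by rewrite -[[:: y2]]/(nseq 1 y2) sbr_letter_nseq !mul0r.
- rewrite xs_yy !sbrY_x_rcons_y (@sbrY_x_rcons_y _ b2 [::]) -[x2 :: xs_y n0]/(xs_y n0.+1) /=; ring.
- rewrite cats1 -[rcons (nseq j.+2 x2) y2]/(x2 :: rcons (nseq j.+1 x2) y2) sbrY_x_rcons_y.
  by rewrite (@is_lie_nseq _ _ b2 j.+2 x2 Hb2) // oppr0 !mul0r.
Qed.

Lemma slot_xs_yyE j K : (j < K <= n0.+4)%N ->
  slot j K = ((j == 1%N) && (K == n0.+4))%:R * (b2 [:: x2] * b1 (xs_y n0.+1))
           + ((j == n0.+1) && (K == n0.+3))%:R * (b2 (xs_y n0.+1) * b1 [:: x2]).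
Proof.
case/andP=> HjK HK; case: (leqP K n0.+2) => HK2.
  have -> : (K == n0.+4) = false by apply: ltn_eqF; lia.
  have -> : (K == n0.+3) = false by apply: ltn_eqF; lia.
  by rewrite slot_within_xs ?HjK // !andbF !mul0r addr0.
have [|] : K = n0.+3 \/ K = n0.+4 by lia.
- move=> EK; subst K; rewrite slot_to_first_y // (ltn_eqF (ltnSn n0.+3)) eqxx.
  by rewrite andbF andbT mul0r add0r.
- move=> EK; subst K; rewrite slot_to_last_y // (gtn_eqF (ltnSn n0.+3)) eqxx.
  by rewrite andbF andbT mul0r addr0.
Qed.

Lemma der_sbrY_xs_yy : der (gen2 a1 b1) (sbr (Y2 k) b2) v0
  = b2 [:: x2] * b1 (xs_y n0.+1) + b2 (xs_y n0.+1) * b1 [:: x2].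
Proof.
rewrite derE size_cat size_nseq addn2.
set T1 := b2 [:: x2] * _; set T2 := b2 _ * b1 [:: x2].
transitivity (\sum_(l < n0.+4.+1) \sum_(j < l)
   (((j == 1%N :> nat) && (n0.+4 - (l - j.+1) == n0.+4)%N)%:R * T1
    + ((j == n0.+1 :> nat) && (n0.+4 - (l - j.+1) == n0.+3)%N)%:R * T2)).
  apply: eq_bigr => l _; apply: eq_bigr => j _; apply: slot_xs_yyE.
  by move: (ltn_ord j) (ltn_ord l); lia.
under eq_bigr => l _ do rewrite big_split.
by rewrite big_split /= !(sum_slots (N := n0.+4)) //; lia.
Qed.

End DerAtXsYY.

Lemma kv2_bracket_coef (k : fieldType) m (a1 b1 a2 b2 b : ser k 2) :
  (3 <= m)%N -> sder2 a1 b1 -> sder2 a2 b2 ->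
  (forall w, sbr (Y2 k) b w
             = der (gen2 a1 b1) (sbr (Y2 k) b2) w - der (gen2 a2 b2) (sbr (Y2 k) b1) w) ->
  b (xs_y m.-1) = 0.
Proof.
case: m => [|[|[|n0]]] // _ Hs1 Hs2 Hb.
have [_ Hb1 _ _ _] := Hs1; have [_ Hb2 _ _ _] := Hs2.
have := Hb (nseq n0.+2 x2 ++ [:: y2; y2]).
rewrite (der_sbrY_xs_yy n0 Hs1 Hb2) (der_sbrY_xs_yy n0 Hs2 Hb1).
rewrite xs_yy sbrY_x_rcons_y => Hbr.
have -> : b (xs_y n0.+2) = - (- b (x2 :: xs_y n0.+1)) by rewrite opprK.
by rewrite Hbr; ring.
Qed.

Unset Implicit Arguments.
Set Strict Implicit.

Theorem proposition4p4 (k : fieldType) (Hchar : [pchar k] =i pred0) :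
  (forall (a b : ser k 2) (f : nat -> k),
      kv2 a b -> is_f a b f -> forall m : nat, ~~ odd m -> f m = 0)
  /\
  (forall m : nat, odd m -> (3 <= m)%N ->
     (forall (a1 b1 a2 b2 a b : ser k 2) (f1 f2 f : nat -> k) (c1 c2 : k),
        kv2 a1 b1 -> kv2 a2 b2 -> is_f a1 b1 f1 -> is_f a2 b2 f2 ->
        (forall w, a w = c1 * a1 w + c2 * a2 w) ->
        (forall w, b w = c1 * b1 w + c2 * b2 w) ->
        is_f a b f -> f m = c1 * f1 m + c2 * f2 m)
     /\
     (forall (a1 b1 a2 b2 a b : ser k 2) (f : nat -> k),
        kv2 a1 b1 -> kv2 a2 b2 -> kv2 a b ->
        (forall w, sbr (X2 k) a w
                   = (der (gen2 a1 b1) (sbr (X2 k) a2) w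
                      - der (gen2 a2 b2) (sbr (X2 k) a1) w)) ->
        (forall w, sbr (Y2 k) b w
                   = (der (gen2 a1 b1) (sbr (Y2 k) b2) w
                      - der (gen2 a2 b2) (sbr (Y2 k) b1) w)) ->
        is_f a b f -> f m = 0)).
Proof.
split.
- move=> a b f [Hs _] Hf [|[|m]] // Hm; first by case: Hf => [[]].
  rewrite (is_f_trace_sum Hchar Hf) // trace_sum_div2 // (sder2_b_xs_y_odd Hchar Hs) //.
    by rewrite oppr0 mul0r.
  by rewrite /= negbK in Hm.
- move=> m Hodd Hm3; have Hm2 : (2 <= m)%N := ltnW Hm3.
  split.
  + move=> a1 b1 a2 b2 a b f1 f2 f c1 c2 _ _ Hf1 Hf2 Ha Hb Hf.
    rewrite (is_f_trace_sum Hchar Hf Hm2) (is_f_trace_sum Hchar Hf1 Hm2).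
    rewrite (is_f_trace_sum Hchar Hf2 Hm2).
    by rewrite (trace_sum_lincomb m (one_y k) (div2_lincomb Ha Hb)); ring.
  + move=> a1 b1 a2 b2 a b f [Hs1 _] [Hs2 _] [Hs _] _ Hb Hf.
    rewrite (is_f_trace_sum Hchar Hf Hm2) trace_sum_div2 ?(kv2_bracket_coef Hm3 Hs1 Hs2 Hb) //.
      by rewrite oppr0 mul0r.
    exact: ltnW.
Qed.
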